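(* Let $0\le k\le n$ be fixed. Let $\mathcal{G}=\{U^g\mid g\in G=\mathbb{Z}_2^{\times(n-k)}\}$, where $U^e=I^{\otimes n}$, be a Pauli stabilizer group on $\mathcal{H}\simeq(\mathbb{C}^2)^{\otimes n}$, i.e. $-I\notin\mathcal{G}$ and for all $g,h\in G$: $U^g\in\mathcal{P}_n$, $[U^g,U^h]=0$, $U^gU^h=U^{gh}\in\mathcal{G}$, and $U^g=U^h$ iff $g=h$. Then there exists $A\subseteq\{1,\ldots,n\}$ with exactly $k$ elements such that $\pi_A(U^g)=I^{\otimes n}$ if and only if $g=e$, where $\pi_A=\prod_{a\in A}\pi_a$.
   Context: $\mathcal{P}_n$ is the $n$-qubit Pauli group (operators $i^\lambda\mathcal{O}_1\cdots\mathcal{O}_n$, $\lambda\in\{0,1,2,3\}$, $\mathcal{O}_j\in\{I,X,Y,Z\}$ acting on qubit $j$). For $a\in\{1,\ldots,n\}$, $\pi_a:\mathcal{P}_n\to\mathcal{P}_n$ maps $i^\lambda\mathcal{O}_1\cdots\mathcal{O}_{a-1}\mathcal{O}_a\mathcal{O}_{a+1}\cdots\mathcal{O}_n$ to $\mathcal{O}_1\cdots\mathcal{O}_{a-1}I\mathcal{O}_{a+1}\cdots\mathcal{O}_n$, i.e. it replaces the $a$-th letter by the identity and removes any prefactor other than $1$. *)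

From HB Require Import structures.
From mathcomp Require Import all_boot all_algebra.
Set Implicit Arguments. Unset Strict Implicit. Unset Printing Implicit Defensive.
Import GRing.Theory.
Local Open Scope ring_scope.

Inductive pauli := PI | PX | PY | PZ.

Definition pauli_to_nat (p : pauli) : nat :=
  match p with PI => 0 | PX => 1 | PY => 2 | PZ => 3 end.
Definition nat_to_pauli (k : nat) : pauli :=
  match k with 0 => PI | 1 => PX | 2 => PY | _ => PZ end.
Lemma pauli_natK : cancel pauli_to_nat nat_to_pauli. Proof. by case. Qed.
HB.instance Definition _ := Equality.copy pauli (can_type pauli_natK).

(* product of single-qubit Paulis: P * Q = i^(fst) * (snd) *)
Definition mulP1 (p q : pauli) : nat * pauli :=
  match p, q with
  | PI, r | r, PI => (0%N, r)
  | PX, PX | PY, PY | PZ, PZ => (0%N, PI)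
  | PX, PY => (1%N, PZ) | PY, PX => (3%N, PZ)
  | PY, PZ => (1%N, PX) | PZ, PY => (3%N, PX)
  | PZ, PX => (1%N, PY) | PX, PZ => (3%N, PY)
  end.

(* an element i^phase O_1 ... O_n of the n-qubit Pauli group P_n *)
Record pauliop (n : nat) := PauliOp { phase : 'Z_4 ; letters : {ffun 'I_n -> pauli} }.

Definition pmul (n : nat) (u v : pauliop n) : pauliop n :=
  PauliOp (phase u + phase v + \sum_(j < n) ((mulP1 (letters u j) (letters v j)).1)%:R)
          [ffun j => (mulP1 (letters u j) (letters v j)).2].

Definition pid (n : nat) : pauliop n := PauliOp 0 [ffun _ => PI].
Definition pminus_id (n : nat) : pauliop n := PauliOp 2%:R [ffun _ => PI].

Definition pi_a (n : nat) (a : 'I_n) (u : pauliop n) : pauliop n :=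
  PauliOp 0 [ffun j => if j == a then PI else letters u j].

Definition pi_A (n : nat) (A : {set 'I_n}) (u : pauliop n) : pauliop n :=
  foldr (@pi_a n) u (enum A).

(* The map g |-> U^g is injective even after forgetting phases: if U^g has
   only identity letters then U^g = i^p I with U^g U^g = U^e forcing p in {0,2},
   and p = 2 is excluded since -I is not in the group.  For each qubit j the g
   with an identity letter at j form a subgroup, and these subgroups meet
   trivially.  Greedily adding a qubit whose subgroup misses a nontrivial
   survivor at least halves the current intersection (Lagrange), so some set
   B of at most n - k qubits already has trivial intersection; any k qubits
   outside B form the required A. *)
From mathcomp Require Import all_boot all_fingroup all_algebra zify.
Set Implicit Arguments.
Unset Strict Implicit.
Unset Printing Implicit Defensive.
Import GRing.Theory.
Local Open Scope ring_scope.

Lemma exists_subset_card (T : finType) (S : {set T}) k :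
  (k <= #|S|)%N -> exists A : {set T}, A \subset S /\ #|A| = k.
Proof.
move=> leqkS; exists [set x in take k (enum S)]; split.
  by apply/subsetP => x; rewrite inE => /mem_take; rewrite mem_enum.
rewrite cardsE (card_uniqP (take_uniq _ (enum_uniq _))).
by rewrite size_takel // -cardE.
Qed.

Section SmallTrivialSubfamily.

Variables (gT : finGroupType) (I : finType) (H : I -> {group gT}).
Local Open Scope group_scope.

Lemma small_subfamily_meet_trivial (G : {group gT}) :
  G :&: \bigcap_i H i = 1 ->
  exists B : {set I}, (2 ^ #|B| <= #|G|)%N /\ G :&: \bigcap_(i in B) H i = 1.
Proof.
move: {2}_.+1 (ltnSn #|G|) => m; elim: m G => // m IHm G leGm trivG.
have [G1 | /trivgPn[x Gx ntx]] := eqsVneq G 1.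
  by exists set0; rewrite cards0 big_set0 setIT G1 cards1.
have [i Hi'x] : exists i, x \notin H i.
  apply/existsP; apply: contraR ntx; rewrite negb_exists => /forallP Hx.
  have : x \in G :&: \bigcap_i H i.
    by rewrite inE Gx; apply/bigcapP => i _; apply/negPn/Hx.
  by rewrite trivG => /set1gP ->.
have properGHi : ~~ (G \subset H i) by apply/subsetPn; exists x.
have halfGHi : (2 * #|G :&: H i| <= #|G|)%N.
  rewrite -(Lagrange (subsetIl G (H i))) mulnC leq_mul2l indexg_gt1.
  by rewrite subsetI subxx properGHi orbT.
have ltGHi : (#|G :&: H i| < m)%N.
  by rewrite -ltnS (leq_trans _ leGm) // ltnS (leq_trans _ halfGHi) // ltn_Pmull.
have GHi_meet : (G :&: H i)%G :&: \bigcap_j H j = 1.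
  by apply/trivgP; rewrite -trivG setSI ?subsetIl.
have [B [cardB trivB]] := IHm _ ltGHi GHi_meet.
exists (i |: B); split.
  rewrite (leq_trans _ halfGHi) // (leq_trans _ (leq_mul (leqnn 2) cardB)) //.
  by rewrite -expnS leq_pexp2l // cardsU1 -add1n leq_add2r leq_b1.
apply/trivgP; rewrite -trivB; apply/subsetP => y; rewrite !inE => /andP[Gy HBy].
rewrite Gy; move/bigcapP: HBy => HBy.
by rewrite HBy ?setU11 //=; apply/bigcapP => j Bj; rewrite HBy // setU1r.
Qed.

End SmallTrivialSubfamily.

Lemma addmx_pchar2 (R : nzRingType) m n (A : 'M[R]_(m, n)) :
  2%N \in [pchar R] -> A + A = 0.
Proof. by move=> R2; apply/matrixP => i j; rewrite !mxE addrr_pchar2. Qed.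

Lemma Z4_double_eq0 (p : 'Z_4) : p + p = 0 -> p = 0 \/ p = 2%:R.
Proof. by case: p => [[|[|[|[|?]]]] ?] //= _; [left | right]; apply/val_inj. Qed.

Definition pscalar n (p : 'Z_4) : pauliop n := PauliOp p [ffun=> PI].

Lemma pscalar_letters n (u : pauliop n) :
  (forall j, letters u j = PI) -> u = pscalar n (phase u).
Proof. by case: u => p L /= LI; congr PauliOp; apply/ffunP => j; rewrite LI ffunE. Qed.

Lemma pmul_pscalar n p q : pmul (pscalar n p) (pscalar n q) = pscalar n (p + q).
Proof.
rewrite /pmul /=; congr PauliOp; last by apply/ffunP => j; rewrite !ffunE.
by rewrite big1 ?addr0 // => j _; rewrite !ffunE.
Qed.

Lemma pi_A_letters n (A : {set 'I_n}) u j :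
  letters (pi_A A u) j = if j \in A then PI else letters u j.
Proof.
rewrite /pi_A -mem_enum; elim: (enum A) => [|a s IH] //=.
by rewrite ffunE in_cons IH; case: (j == a).
Qed.

Lemma pi_A_pid n (A : {set 'I_n}) : pi_A A (pid n) = pid n.
Proof.
rewrite /pi_A; elim: (enum A) => //= a s ->.
by congr PauliOp; apply/ffunP => j; rewrite !ffunE; case: ifP.
Qed.

Section StabilizerGroup.

Variables (n m : nat) (U : 'rV['F_2]_m -> pauliop n).
Hypotheses (He : U 0 = pid n) (HminusI : forall g, U g <> pminus_id n).
Hypothesis Hhom : forall g h, pmul (U g) (U h) = U (g + h).
Hypothesis Hinj : forall g h, U g = U h <-> g = h.

Lemma stabilizer_letters_faithful g : (forall j, letters (U g) j = PI) -> g = 0.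
Proof.
move/pscalar_letters; move: (phase (U g)) => p Ug.
have : p + p = 0.
  have := Hhom g g; rewrite addmx_pchar2 ?pchar_Fp // He Ug pmul_pscalar.
  by move/(congr1 (@phase n)).
case/Z4_double_eq0 => p_val; last by case: (@HminusI g); rewrite Ug p_val.
by apply/Hinj; rewrite Ug He p_val.
Qed.

Definition letter_kernel j := [set g | letters (U g) j == PI].

Lemma group_set_letter_kernel j : group_set (letter_kernel j).
Proof.
apply/group_setP; split => [|x y]; first by rewrite inE FinRing.zmod1gE He ffunE.
by rewrite !inE FinRing.zmodMgE -Hhom ffunE => /eqP-> /eqP->.
Qed.

Canonical letter_kernel_group j := Group (group_set_letter_kernel j).

Lemma exists_small_faithful_qubits :
  exists B : {set 'I_n}, (#|B| <= m)%N /\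
    forall g, (forall j, j \in B -> letters (U g) j = PI) -> g = 0.
Proof.
have meet_trivial : [set: 'rV_m]%G :&: \bigcap_j letter_kernel_group j = 1%g.
  apply/trivgP/subsetP => g; rewrite inE => /andP[_ /bigcapP kerg]; apply/set1gP.
  apply: stabilizer_letters_faithful => j; apply/eqP.
  by have := kerg j isT; rewrite inE.
have [B [cardB trivB]] := small_subfamily_meet_trivial meet_trivial.
exists B; split.
  by move: cardB; rewrite cardsT card_mx card_Fp // mul1n leq_exp2l.
move=> g Bg; apply/set1gP; rewrite -trivB inE in_setT; apply/bigcapP => j Bj.
by rewrite inE Bg.
Qed.

End StabilizerGroup.

Theorem mainTheorem13 (n k : nat) (hk : (k <= n)%N)
  (U : 'rV['F_2]_(n - k) -> pauliop n)
  (He : U 0 = pid n)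
  (HminusI : forall g, U g <> pminus_id n)
  (Hcomm : forall g h, pmul (U g) (U h) = pmul (U h) (U g))
  (Hhom : forall g h, pmul (U g) (U h) = U (g + h))
  (Hinj : forall g h, U g = U h <-> g = h) :
  exists A : {set 'I_n}, #|A| = k /\
    (forall g, pi_A A (U g) = pid n <-> g = 0).
Proof.
have [B [cardB faithfulB]] := exists_small_faithful_qubits He HminusI Hhom Hinj.
have [A [sAB cardA]] : exists A : {set 'I_n}, A \subset ~: B /\ #|A| = k.
  by apply: exists_subset_card; rewrite cardsCs setCK card_ord; lia.
exists A; split => // g; split => [piAg | ->]; last by rewrite He pi_A_pid.
apply: faithfulB => j Bj.
have /negbTE notAj : j \notin A by apply: contraL Bj => /(subsetP sAB); rewrite inE.
by have := congr1 (fun u => letters u j) piAg; rewrite pi_A_letters notAj ffunE.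
Qed.
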